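(* Let $n\ge 2$ be an integer and let $$\mathcal{T}_n:=\{(0,S_1,\dots,S_{2n})\in\mathbb{Z}^{2n+1}: |S_i-S_{i-1}|=1 \text{ for } 1\le i\le 2n\ (S_0=0),\ S_{2n}=0,\ S_i\ge 0 \text{ for all } 1\le i\le 2n-1\}.$$ For a path $(0,S_1,\dots,S_{2n})\in\mathcal{T}_n$ let $N(0,S_1,\dots,S_{2n}):=|\{i\in\{1,\dots,n-1\}: S_{2i}=0\}|$, and set $$C_n:=\{S\in\mathcal{T}_n: N(S)=0\},\qquad D_n:=\{S\in\mathcal{T}_n: N(S)=1\}.$$ For $(0,S_1,\dots,S_{2n})\in C_n$ let $\tau:=\min\{k>1: S_k=1\}$, and for $\ell=1,\dots,2n$ define $$T_\ell:=\begin{cases}S_\ell-2 & \text{if } 1<\ell<\tau \text{ and } S_{\ell+1}=S_\ell-1,\\ S_\ell & \text{otherwise},\end{cases}$$ and let $\Phi_2(0,S_1,\dots,S_{2n}):=(0,T_1,\dots,T_{2n})$. Then $\Phi_2$ is a well-defined map from $C_n$ to $D_n$ and it is a bijection between $C_n$ and $D_n$.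
   Context: $C_n$ is the set of $2n$-step simple random walk paths from $0$ to $0$ that are strictly positive at all intermediate times $1,\dots,2n-1$; $D_n$ is the set of $2n$-step simple random walk paths from $0$ to $0$ that are nonnegative at all times and return to $0$ at exactly one intermediate time. *)

(* A path (0,S_1,...,S_2n) is a sequence s : seq int of size
   2n+1 with nth 0 s i = S_i (so s`_0 = S_0 = 0). *)
From mathcomp Require Import all_boot all_order all_algebra.
Set Implicit Arguments. Unset Strict Implicit. Unset Printing Implicit Defensive.
Import Order.TTheory GRing.Theory Num.Theory.
Local Open Scope ring_scope.

Definition Tn (n : nat) (s : seq int) : Prop :=
  [/\ size s = (2 * n).+1,
      s`_0 = 0,
      (forall i : nat, (1 <= i <= 2 * n)%N -> `|s`_i - s`_i.-1| = 1),
      s`_(2 * n) = 0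
    & (forall i : nat, (1 <= i <= (2 * n).-1)%N -> 0 <= s`_i)].

Definition Ncount (n : nat) (s : seq int) : nat :=
  count (fun i => s`_(2 * i) == 0) (iota 1 n.-1).

Definition Cn (n : nat) (s : seq int) : Prop := Tn n s /\ Ncount n s = 0%N.
Definition Dn (n : nat) (s : seq int) : Prop := Tn n s /\ Ncount n s = 1%N.

(* tau = min { k > 1 : S_k = 1 } (returns size s if no such k, which never
   happens for s in C_n with n >= 2). *)
Definition tau (s : seq int) : nat := (2 + find (pred1 (1 : int)) (drop 2 s))%N.

Definition Phi2 (s : seq int) : seq int :=
  mkseq (fun l => if (1 < l < tau s)%N && (s`_l.+1 == s`_l - 1)
                  then s`_l - 2 else s`_l) (size s).

From mathcomp Require Import all_boot all_order all_algebra zify.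
Import Order.TTheory GRing.Theory Num.Theory.
Set Implicit Arguments. Unset Strict Implicit.
Local Open Scope ring_scope.

(* A path s of C_n stays at height >= 2 strictly between times 1 and tau, where it
   first comes back to 1.  Phi2 s deletes the initial up-step and lowers that part
   by one, so that (Phi2 s)_l = s_(l+1) - 1 for l < tau and s_l afterwards: the
   result is a nonnegative bridge whose only interior zero is at tau - 1.  Conversely,
   a path of D_n with interior zero at m is the image of the path obtained by prefixing
   an up-step, raising the part before m by one and skipping the visit to 0 at m; as
   tau - 1 can be read off Phi2 s, this gives a two-sided inverse.  Since a path is at
   an odd height at odd times, N counts all interior zeros, not only those at even
   times. *)

Lemma count_iota_double (p : pred nat) (k : nat) :
  (forall l, (l <= (2 * k).+1)%N -> odd l -> ~~ p l) ->
  count p (iota 1 (2 * k).+1) = count (fun i => p (2 * i)%N) (iota 1 k).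
Proof.
elim: k => [|k IHk] p_odd; first by rewrite /= (negbTE (p_odd 1%N isT isT)).
rewrite (_ : (2 * k.+1).+1 = (2 * k).+1 + 2)%N; last by lia.
rewrite -[k.+1]addn1 !iotaD !count_cat IHk; last by move=> l l_le; apply: p_odd; lia.
congr (_ + _)%N; rewrite (_ : (1 + (2 * k).+1 = 2 * (1 + k))%N); last by lia.
by rewrite /= (negbTE (p_odd (2 * (1 + k)).+1 _ _)) // oddS oddM.
Qed.

Definition interior_zeros (n : nat) (s : seq int) : seq nat :=
  [seq l <- iota 1 (2 * n).-1 | s`_l == 0 :> int].

Lemma mem_interior_zeros n s l :
  (l \in interior_zeros n s) = (0 < l < 2 * n)%N && (s`_l == 0 :> int).
Proof. by rewrite mem_filter mem_iota andbC; congr (_ && _); lia. Qed.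

Lemma interior_zeros_eq1 n s m : (0 < m < 2 * n)%N ->
  (forall l, (0 < l < 2 * n)%N -> (s`_l == 0 :> int) = (l == m)) ->
  interior_zeros n s = [:: m].
Proof.
move=> m_in zero_m.
have m_iota : m \in iota 1 (2 * n).-1 by rewrite mem_iota; lia.
rewrite -(filter_pred1_uniq (iota_uniq _ _) m_iota).
by apply: eq_in_filter => l; rewrite mem_iota => l_in; apply: zero_m; lia.
Qed.

Lemma interior_zerosP n s m :
  interior_zeros n s = [:: m] <->
  (0 < m < 2 * n)%N /\ (forall l, (0 < l < 2 * n)%N -> (s`_l == 0 :> int) = (l == m)).
Proof.
split=> [zs_m | [m_in zero_m]]; last exact: interior_zeros_eq1.
have := mem_interior_zeros n s m; rewrite zs_m mem_seq1 eqxx => /esym/andP[m_in _].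
split=> // l l_in; have := mem_interior_zeros n s l.
by rewrite zs_m mem_seq1 l_in.
Qed.

Lemma interior_zeros_nil n s :
  (forall l, (0 < l < 2 * n)%N -> s`_l != 0) -> interior_zeros n s = [::].
Proof.
move=> s_ne0; rewrite /interior_zeros (eq_in_filter (a2 := pred0)) ?filter_pred0 // => l.
by rewrite mem_iota => l_in; apply/negbTE/s_ne0; lia.
Qed.

Lemma tau_first (s : seq int) k : (1 < k < size s)%N -> s`_k = 1 ->
  [/\ (1 < tau s <= k)%N, s`_(tau s) = 1 & forall l, (1 < l < tau s)%N -> s`_l != 1].
Proof.
move=> k_in sk; set d := drop 2 s.
have d_k : d`_(k - 2) = 1 by rewrite nth_drop subnKC //; lia.
have has1 : has (pred1 (1 : int)) d.
  by apply/(has_nthP (0 : int)); exists (k - 2)%N; [rewrite /d size_drop; lia | rewrite d_k /=].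
have find_le : (find (pred1 (1 : int)) d <= k - 2)%N.
  by rewrite leqNgt; apply/negP => /(before_find 0); rewrite d_k /= eqxx.
split.
- rewrite /tau -/d; lia.
- by have /eqP := nth_find 0 has1; rewrite nth_drop.
- move=> l l_in; have l_lt : (l - 2 < find (pred1 (1 : int)) d)%N by move: l_in; rewrite /tau -/d; lia.
  by have /negbT := before_find 0 l_lt; rewrite nth_drop subnKC //; lia.
Qed.

Definition raise_prefix (m : nat) (t : seq int) : seq int :=
  mkseq (fun l => if (0 < l <= m)%N then t`_l.-1 + 1 else t`_l) (size t).

Lemma raise_prefix_nth m t l : (l < size t)%N ->
  (raise_prefix m t)`_l = if (0 < l <= m)%N then t`_l.-1 + 1 else t`_l.
Proof. by move=> l_lt; rewrite nth_mkseq. Qed.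

Section Paths.

Variable n : nat.

Lemma Tn_parity s i : Tn n s -> (i <= 2 * n)%N -> exists k : int, s`_i = i%:Z + 2 * k.
Proof.
case=> _ s0 step _ _; elim: i => [|i IHi] i_le; first by exists 0; rewrite s0.
have [k sk] := IHi (ltnW i_le).
have step_i : `|s`_i.+1 - s`_i| = 1 by apply: step; lia.
have [up | down] : s`_i.+1 = s`_i + 1 \/ s`_i.+1 = s`_i - 1 by lia.
- by exists k; lia.
- by exists (k - 1); lia.
Qed.

Lemma Tn_odd_neq0 s i : Tn n s -> (i <= 2 * n)%N -> odd i -> s`_i != 0.
Proof. by move=> s_Tn i_le i_odd; have [k] := Tn_parity s_Tn i_le; lia. Qed.

Lemma Ncount_interior_zeros s : Tn n s -> Ncount n s = size (interior_zeros n s).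
Proof.
move=> s_Tn; rewrite size_filter /Ncount.
have [-> // | n_gt0] := posnP n.
rewrite (_ : (2 * n).-1 = (2 * n.-1).+1)%N; last by lia.
by rewrite count_iota_double // => l l_le l_odd; apply: Tn_odd_neq0 => //; lia.
Qed.

Lemma Tn_ge0 s l : Tn n s -> (l <= 2 * n)%N -> 0 <= s`_l.
Proof.
case=> _ s0 _ s2n s_ge0 l_le.
have [-> | l_gt0] := posnP l; first by rewrite s0.
have [-> | l_ne] := eqVneq l (2 * n)%N; first by rewrite s2n.
by apply: s_ge0; lia.
Qed.

Lemma Tn_zero_pred s m : Tn n s -> (0 < m <= 2 * n)%N -> s`_m = 0 -> s`_m.-1 = 1.
Proof.
move=> s_Tn m_in sm; have [_ _ step _ _] := s_Tn.
have := step m m_in; have := Tn_ge0 (l := m.-1) s_Tn; rewrite sm; lia.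
Qed.

Lemma Tn_zero_succ s m : Tn n s -> (m < 2 * n)%N -> s`_m = 0 -> s`_m.+1 = 1.
Proof.
move=> s_Tn m_lt sm; have [_ _ step _ _] := s_Tn.
have := step m.+1; have := Tn_ge0 (l := m.+1) s_Tn; rewrite /= sm; lia.
Qed.

Lemma Cn_interior_zeros s : Cn n s <-> Tn n s /\ interior_zeros n s = [::].
Proof.
rewrite /Cn; split=> -[s_Tn zs]; split=> //; move: zs; rewrite Ncount_interior_zeros //.
  exact: size0nil.
by move->.
Qed.

Lemma Dn_interior_zeros t : Dn n t <-> Tn n t /\ exists m, interior_zeros n t = [:: m].
Proof.
rewrite /Dn; split=> -[t_Tn zs]; split=> //; move: zs; rewrite Ncount_interior_zeros //.
  by case: (interior_zeros n t) => [|m []] // _; exists m.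
by case=> m ->.
Qed.

Lemma Cn_gt0 s l : Cn n s -> (0 < l < 2 * n)%N -> 0 < s`_l.
Proof.
case/Cn_interior_zeros=> s_Tn zs l_in.
have := Tn_ge0 (l := l) s_Tn; have := mem_interior_zeros n s l.
by rewrite zs l_in in_nil /=; lia.
Qed.

Hypothesis n_gt1 : (1 < n)%N.

Lemma Cn_start s : Cn n s -> s`_1 = 1 /\ s`_2 = 2.
Proof.
move=> s_Cn; have [[_ s0 step _ _] _] := s_Cn.
have := Cn_gt0 (l := 1) s_Cn; have := Cn_gt0 (l := 2) s_Cn.
have := step 1%N; have := step 2%N; rewrite /= s0; lia.
Qed.

Lemma tau_Cn s : Cn n s ->
  [/\ (2 < tau s < 2 * n)%N, s`_(tau s) = 1 & forall l, (1 < l < tau s)%N -> 1 < s`_l].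
Proof.
move=> s_Cn; have [[s_size _ _ s2n _] _] := s_Cn; have [_ s2] := Cn_start s_Cn.
have last1 : s`_(2 * n).-1 = 1 by apply: Tn_zero_pred s_Cn.1 _ s2n; lia.
have [|tau_in tau1 not1] := tau_first _ last1; first by rewrite s_size; lia.
have tau_ne2 : tau s != 2%N by apply/eqP => tau2; move: tau1; rewrite tau2 s2.
split=> [|//|l l_in]; first lia.
by have := not1 l l_in; have := Cn_gt0 (l := l) s_Cn; lia.
Qed.

Lemma Phi2_nth s l : Cn n s -> (l <= 2 * n)%N ->
  (Phi2 s)`_l = if (l < tau s)%N then s`_l.+1 - 1 else s`_l.
Proof.
move=> s_Cn l_le; have [[s_size s0 step _ _] _] := s_Cn.
have [s1 s2] := Cn_start s_Cn; have [tau_in _ _] := tau_Cn s_Cn.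
rewrite /Phi2 nth_mkseq ?s_size //.
case: (ltnP l (tau s)) => [l_lt | _]; last by rewrite andbF.
have [-> | l_gt0] := posnP l; first by rewrite s0 s1.
have [l_le1 | l_gt1] := leqP l 1%N.
  have -> : l = 1%N by lia.
  by rewrite s1 s2.
have := step l.+1; rewrite /=; case: eqP; lia.
Qed.

Lemma Phi2_Tn s : Cn n s -> Tn n (Phi2 s).
Proof.
move=> s_Cn; have [[s_size s0 step s2n s_ge0] _] := s_Cn.
have [tau_in tau1 _] := tau_Cn s_Cn; have [s1 _] := Cn_start s_Cn.
have P := fun l => @Phi2_nth s l s_Cn.
split.
- by rewrite size_mkseq.
- by rewrite P // (_ : 0 < tau s)%N ?s1 //; lia.
- move=> i i_in; rewrite !P; try lia.
  have [-> | i_ne] := eqVneq i (tau s).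
    by rewrite ltnn prednK ?tau1 ?leqnn //; lia.
  have := step i i_in; have := step i.+1; rewrite /= (prednK (_ : 0 < i)%N); last by lia.
  by case: ifP; case: ifP; lia.
- by rewrite P // ifN ?s2n // -leqNgt; lia.
- move=> i i_in; rewrite P; last by lia.
  by case: ifP => i_lt; [have := Cn_gt0 (l := i.+1) s_Cn | have := s_ge0 i i_in]; lia.
Qed.

Lemma interior_zeros_Phi2 s : Cn n s -> interior_zeros n (Phi2 s) = [:: (tau s).-1].
Proof.
move=> s_Cn; have [tau_in tau1 tau_gt1] := tau_Cn s_Cn.
apply/interior_zerosP; split=> [|l l_in]; first lia.
rewrite Phi2_nth //; last by lia.
have [-> | l_ne] := eqVneq l (tau s).-1.
  by rewrite prednK ?leqnn ?tau1; lia.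
apply/negbTE; case: ifP => l_lt.
- by have := tau_gt1 l.+1; lia.
- by have := Cn_gt0 (l := l) s_Cn; lia.
Qed.

Lemma Phi2K s : Cn n s -> raise_prefix (tau s).-1 (Phi2 s) = s.
Proof.
move=> s_Cn; have [[s_size s0 _ _ _] _] := s_Cn.
have [tau_in _ _] := tau_Cn s_Cn; have [s1 _] := Cn_start s_Cn.
apply: (@eq_from_nth _ 0); first by rewrite !size_mkseq.
move=> l; rewrite !size_mkseq s_size => l_lt.
rewrite raise_prefix_nth ?size_mkseq ?s_size //.
have [l_in | l_out] := boolP (0 < l <= (tau s).-1)%N; rewrite Phi2_nth //; try lia.
- by rewrite prednK; [case: ifP; lia | lia].
- have [l_tau | //] := ltnP l (tau s); have -> : l = 0%N by lia.
  by rewrite s0 s1.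
Qed.

Section RaisePrefix.

Variables (t : seq int) (m : nat).
Hypotheses (t_Tn : Tn n t) (t_zero : interior_zeros n t = [:: m]).

Local Notation R := (raise_prefix m t).

Let m_in : (0 < m < 2 * n)%N.
Proof. by have [] := interior_zerosP n t m; case/(_ t_zero). Qed.

Let t_pos l : (0 < l < 2 * n)%N -> l != m -> 0 < t`_l.
Proof.
move=> l_in l_ne; have [_ zero_m] := (interior_zerosP n t m).1 t_zero.
by have := zero_m l l_in; have := Tn_ge0 (l := l) t_Tn; rewrite (negbTE l_ne); lia.
Qed.

Let t_pred : t`_m.-1 = 1.
Proof.
have [_ zero_m] := (interior_zerosP n t m).1 t_zero.
by apply: Tn_zero_pred t_Tn _ _; [lia | apply/eqP; rewrite zero_m].
Qed.

Let t_succ : t`_m.+1 = 1.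
Proof.
have [_ zero_m] := (interior_zerosP n t m).1 t_zero.
by apply: Tn_zero_succ t_Tn _ _; [lia | apply/eqP; rewrite zero_m].
Qed.

Let R_nth l : (l <= 2 * n)%N -> R`_l = if (0 < l <= m)%N then t`_l.-1 + 1 else t`_l.
Proof. by have [t_size _ _ _ _] := t_Tn; move=> l_le; rewrite raise_prefix_nth // t_size. Qed.

Lemma raise_prefix_Cn : Cn n R.
Proof.
have [t_size t0 step t2n t_ge0] := t_Tn.
have R_gt0 l : (0 < l < 2 * n)%N -> 0 < R`_l.
  move=> l_in; rewrite R_nth; last by lia.
  by have := t_pos l_in; have := Tn_ge0 (l := l.-1) t_Tn; case: ifP; lia.
apply/Cn_interior_zeros; split; last first.
  by apply: interior_zeros_nil => l /R_gt0/lt0r_neq0.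
split.
- by rewrite size_mkseq.
- by rewrite R_nth.
- move=> i i_in; rewrite !R_nth; try lia.
  have [-> | i_ne] := eqVneq i m.+1.
    by rewrite /= t_succ t_pred; case: ifP; case: ifP; lia.
  have [-> | i_ne1] := eqVneq i 1%N.
    by rewrite /= t0; case: ifP; lia.
  have := step i i_in; have := step i.-1.
  by case: ifP; case: ifP; lia.
- by rewrite R_nth //; case: ifP; lia.
- by move=> i i_in; have := R_gt0 i; lia.
Qed.

Lemma tau_raise_prefix : tau R = m.+1.
Proof.
have [t_size _ _ _ _] := t_Tn.
have R_succ : R`_m.+1 = 1 by rewrite R_nth ?ltnn ?andbF //; lia.
have [|tau_le tau1 _] := tau_first _ R_succ; first by rewrite size_mkseq t_size; lia.
have [tau_lt | tau_gt | //] := ltngtP (tau R) m.+1; last by lia.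
have := t_pos (l := (tau R).-1); have := R_nth (l := tau R); rewrite tau1; case: ifP; lia.
Qed.

Lemma raise_prefixK : Phi2 R = t.
Proof.
have [t_size t0 _ _ _] := t_Tn.
have [_ zero_m] := (interior_zerosP n t m).1 t_zero.
have tm : t`_m = 0 by apply/eqP; rewrite zero_m.
apply: (@eq_from_nth _ 0); first by rewrite !size_mkseq.
move=> l; rewrite !size_mkseq t_size => l_le.
rewrite Phi2_nth ?tau_raise_prefix; [|exact: raise_prefix_Cn | lia].
have [-> | l_ne] := eqVneq l m.
  by rewrite ltnSn R_nth ?ltnn ?andbF ?t_succ ?tm //; lia.
have [l_lt | l_gt] := ltnP l m.+1.
  by rewrite R_nth /=; [case: ifP; lia | lia].
by rewrite R_nth; [case: ifP; lia | lia].
Qed.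

End RaisePrefix.

End Paths.

Theorem theorem2 (n : nat) (hn : (2 <= n)%N) :
  (forall s, Cn n s -> Dn n (Phi2 s)) /\
  (forall s t, Cn n s -> Cn n t -> Phi2 s = Phi2 t -> s = t) /\
  (forall t, Dn n t -> exists s, Cn n s /\ Phi2 s = t).
Proof.
split; [|split].
- move=> s s_Cn; apply/Dn_interior_zeros; split; first exact: Phi2_Tn.
  by exists (tau s).-1; apply: interior_zeros_Phi2.
- move=> s t s_Cn t_Cn Phi2_st.
  have zeros_st : [:: (tau s).-1] = [:: (tau t).-1].
    by rewrite -(interior_zeros_Phi2 hn s_Cn) -(interior_zeros_Phi2 hn t_Cn) Phi2_st.
  have tau_st : (tau s).-1 = (tau t).-1 := congr1 (head 0%N) zeros_st.
  by rewrite -(Phi2K hn s_Cn) -(Phi2K hn t_Cn) Phi2_st tau_st.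
- move=> t /Dn_interior_zeros[t_Tn [m t_zero]].
  exists (raise_prefix m t); split; first exact: raise_prefix_Cn.
  exact: (raise_prefixK hn t_Tn t_zero).
Qed.
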